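(* Let $V_1$ and $V_2$ be near vector spaces over the same commutative $F$ (no finiteness assumption on the number of blocks). If $BT(V_1)=BT(V_2)$, then $\bar F\cap\mathrm{Aut}(V_1)=\bar F\cap\mathrm{Aut}(V_2)$, i.e. a formal sum $\alpha_1+_\cdot\cdots+_\cdot\alpha_n\in\bar F$ acts as an automorphism on $V_1$ if and only if it acts as an automorphism on $V_2$.
   Context: An F-group is a pair $(V,F)$ where $(V,+)$ is a group and $F$ is a set of endomorphisms of $V$ such that: the maps $0,1,-1$ lie in $F$; $F\setminus\{0\}$ is a subgroup of $\mathrm{Aut}(V,+)$ under composition; and if $\alpha x=\beta x$ with $\alpha,\beta\in F$, $x\in V$ then $\alpha=\beta$ or $x=0$. The quasi-kernel $Q(V)$ is the set of $u\in V$ such that for all $\alpha,\beta\in F$ there is $\gamma\in F$ with $\alpha u+\beta u=\gamma u$. $(V,F)$ is a near vector space if $Q(V)$ generates $(V,+)$; ''over a commutative $F$'' means $\alpha(\beta v)=\beta(\alpha v)$ for all $\alpha,\beta\in F$, $v\in V$. For $u\in Q(V)\setminus\{0\}$, $\alpha+_u\beta$ is the unique $\gamma$ with $\alpha u+\beta u=\gamma u$. Elements $u,v\in Q(V)$ are compatible if $u+\lambda v\in Q(V)$ for some $\lambda\in F\setminus\{0\}$. By André's decomposition theorem $V$ is the direct sum of maximal regular (all nonzero quasi-kernel elements pairwise compatible) near vector subspaces $B_i$, $i\in I$, each nonzero element of $Q(V)$ lying in exactly one $B_i$; these are the blocks. For commutative $F$, all nonzero $u\in Q(V)\cap B_i$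 give the same operation $+_{u_i}$ and $B_i$ is a vector space over the field $(F,+_{u_i},\circ)$. The block type is $BT(V)=\{+_{u_i}: i\in I\}$, a set of binary operations on $F$ (equality of block types means equality of these sets of operations, not isomorphism). $\bar F$ is the set of formal finite sums $\alpha_1+_\cdot\cdots+_\cdot\alpha_n$ of elements of $F$, acting on $V$ by $(\alpha_1+_\cdot\cdots+_\cdot\alpha_n)(v)=\alpha_1(v)+\cdots+\alpha_n(v)$; $\bar F\cap\mathrm{Aut}(V)$ is the set of those formal sums acting on $V$ as automorphisms of $(V,+)$. *)

From Stdlib Require Import List.
Set Implicit Arguments.

(* The abstract scalar set F (shared by V1 and V2): a set with 0, 1, -1
   and a multiplication (modelling composition of endomorphisms). *)
Record FData := {
  F_car :> Type;
  F0 : F_car;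
  F1 : F_car;
  Fm1 : F_car;
  Fmul : F_car -> F_car -> F_car }.

Definition F_group_with_zero (F : FData) : Prop :=
  F1 F <> F0 F /\ Fm1 F <> F0 F /\
  (forall a b, a <> F0 F -> b <> F0 F -> Fmul F a b <> F0 F) /\
  (forall a b c, Fmul F a (Fmul F b c) = Fmul F (Fmul F a b) c) /\
  (forall a, Fmul F (F1 F) a = a /\ Fmul F a (F1 F) = a) /\
  (forall a, a <> F0 F ->
     exists b, b <> F0 F /\ Fmul F b a = F1 F /\ Fmul F a b = F1 F).

Record VData (F : FData) := {
  V_car :> Type;
  Vadd : V_car -> V_car -> V_car;
  V0 : V_car;
  Vopp : V_car -> V_car;
  act : F -> V_car -> V_car }.

Arguments Vadd {F} v _ _.
Arguments V0 {F} v.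
Arguments Vopp {F} v _.
Arguments act {F} v _ _.

Definition group_axioms (T : Type) (add : T -> T -> T) (z : T) (opp : T -> T)
  : Prop :=
  (forall x y w, add x (add y w) = add (add x y) w) /\
  (forall x, add z x = x /\ add x z = x) /\
  (forall x, add (opp x) x = z /\ add x (opp x) = z).

Definition is_FGroup (F : FData) (V : VData F) : Prop :=
  group_axioms (Vadd V) (V0 V) (Vopp V) /\
  F_group_with_zero F /\
  (forall (a : F) (x y : V), act V a (Vadd V x y) = Vadd V (act V a x) (act V a y)) /\
  (forall (a b : F) (x : V), act V (Fmul F a b) x = act V a (act V b x)) /\
  (forall x : V, act V (F0 F) x = V0 V) /\
  (forall x : V, act V (F1 F) x = x) /\
  (forall x : V, act V (Fm1 F) x = Vopp V x) /\
  (forall (a b : F) (x : V), act V a x = act V b x -> a = b \/ x = V0 V).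

Definition in_Q (F : FData) (V : VData F) (u : V) : Prop :=
  forall a b : F, exists c : F, Vadd V (act V a u) (act V b u) = act V c u.

Inductive gen (F : FData) (V : VData F) (P : V -> Prop) : V -> Prop :=
  | gen_in : forall x, P x -> gen V P x
  | gen_zero : gen V P (V0 V)
  | gen_opp : forall x, gen V P x -> gen V P (Vopp V x)
  | gen_add : forall x y, gen V P x -> gen V P y -> gen V P (Vadd V x y).

Definition near_vector_space (F : FData) (V : VData F) : Prop :=
  is_FGroup V /\ forall v : V, gen V (@in_Q F V) v.

Definition commutative_over (F : FData) (V : VData F) : Prop :=
  forall (a b : F) (v : V), act V a (act V b v) = act V b (act V a v).

(* op is the operation +_u : for u <> 0 in Q(V), op a b is the unique c with
   a u + b u = c u. *)
Definition is_plus_u (F : FData) (V : VData F) (u : V) (op : F -> F -> F) : Prop :=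
  forall a b : F, act V (op a b) u = Vadd V (act V a u) (act V b u).

(* Block type BT(V) = { +_{u_i} : i in I }, as a predicate on binary operations
   of F.  Every nonzero u in Q(V) lies in exactly one block B_i and gives
   the operation +_{u_i}; hence BT(V) = { +_u : u in Q(V) \ {0} }. *)
Definition block_type (F : FData) (V : VData F) (op : F -> F -> F) : Prop :=
  exists u : V, in_Q V u /\ u <> V0 V /\ is_plus_u V u op.

Definition fsum_act (F : FData) (V : VData F) (s : list F) (v : V) : V :=
  fold_right (fun a acc => Vadd V (act V a v) acc) (V0 V) s.

Definition is_aut (F : FData) (V : VData F) (f : V -> V) : Prop :=
  (forall x y : V, f (Vadd V x y) = Vadd V (f x) (f y)) /\
  (forall x y : V, f x = f y -> x = y) /\
  (forall y : V, exists x : V, f x = y).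

(* Over a commutative F, a formal sum f = a1 +. ... +. an is an additive map
   commuting with the action of F that is diagonal on the quasi-kernel: on a
   nonzero u in Q(V) it acts as the scalar c = a1 +_u ... +_u an.  Such a map
   is an automorphism as soon as it kills no nonzero element of Q(V):
   surjectivity because c^-1 u is a preimage of u, injectivity by induction
   on the length of a sum q + y of quasi-kernel elements in the kernel, using
   that z |-> c z - f z is again diagonal on Q(V) and kills q.  Finally f u = 0
   for u in Q(V) \ {0} iff the scalar a1 +_u ... +_u an is 0, so whether f is
   an automorphism depends only on the set BT(V) of operations +_u. *)

From Stdlib Require Import List Classical IndefiniteDescription.
Set Implicit Arguments.
Unset Strict Implicit.

Section FGroup.

Variables (F : FData) (V : VData F).
Hypothesis HV : is_FGroup V.

Local Notation "x ⊕ y" := (Vadd V x y) (at level 50, left associativity).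
Local Notation "⊖ x" := (Vopp V x) (at level 35, right associativity).
Local Notation "a · x" := (act V a x) (at level 40, left associativity).

Lemma addvA x y z : x ⊕ (y ⊕ z) = x ⊕ y ⊕ z.
Proof. now destruct HV as ((A & _ & _) & _). Qed.

Lemma add0v x : V0 V ⊕ x = x.
Proof. now destruct HV as ((_ & Z & _) & _); apply Z. Qed.

Lemma addv0 x : x ⊕ V0 V = x.
Proof. now destruct HV as ((_ & Z & _) & _); apply Z. Qed.

Lemma addNv x : ⊖ x ⊕ x = V0 V.
Proof. now destruct HV as ((_ & _ & N) & _); apply N. Qed.

Lemma addvN x : x ⊕ ⊖ x = V0 V.
Proof. now destruct HV as ((_ & _ & N) & _); apply N. Qed.

Lemma actD a x y : a · (x ⊕ y) = a · x ⊕ a · y.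
Proof. now destruct HV as (_ & _ & D & _). Qed.

Lemma actM a b x : Fmul F a b · x = a · (b · x).
Proof. now destruct HV as (_ & _ & _ & M & _). Qed.

Lemma act0 x : F0 F · x = V0 V.
Proof. now destruct HV as (_ & _ & _ & _ & Z & _). Qed.

Lemma act1 x : F1 F · x = x.
Proof. now destruct HV as (_ & _ & _ & _ & _ & O & _). Qed.

Lemma actN1 x : Fm1 F · x = ⊖ x.
Proof. now destruct HV as (_ & _ & _ & _ & _ & _ & N & _). Qed.

Lemma act_eq_scalar_or_zero a b x : a · x = b · x -> a = b \/ x = V0 V.
Proof. destruct HV as (_ & _ & _ & _ & _ & _ & _ & P); apply P. Qed.

Lemma F_invertible a : a <> F0 F -> exists b, Fmul F b a = F1 F.
Proof.
  destruct HV as (_ & (_ & _ & _ & _ & _ & I) & _).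
  intro Ha; destruct (I a Ha) as (b & _ & Hb & _); now exists b.
Qed.

Lemma addvI x y z : x ⊕ y = x ⊕ z -> y = z.
Proof.
  intro E; rewrite <- (add0v y), <- (add0v z), <- (addNv x), <- !addvA.
  now rewrite E.
Qed.

Lemma oppv_unique x y : x ⊕ y = V0 V -> y = ⊖ x.
Proof. intro E; apply (addvI (x := x)); now rewrite E, addvN. Qed.

Lemma oppvK x : ⊖ ⊖ x = x.
Proof. symmetry; apply oppv_unique, addNv. Qed.

Lemma oppv0 : ⊖ V0 V = V0 V.
Proof. symmetry; apply oppv_unique, add0v. Qed.

Lemma oppvD x y : ⊖ (x ⊕ y) = ⊖ x ⊕ ⊖ y.
Proof. now rewrite <- !actN1, actD. Qed.

Lemma oppvD_rev x y : ⊖ (x ⊕ y) = ⊖ y ⊕ ⊖ x.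
Proof.
  symmetry; apply oppv_unique.
  now rewrite addvA, <- (addvA x), addvN, addv0, addvN.
Qed.

(* The action of -1 makes negation additive, which forces (V,+) to be abelian. *)
Lemma addvC x y : x ⊕ y = y ⊕ x.
Proof.
  rewrite <- (oppvK x), <- (oppvK y), <- oppvD, oppvD_rev.
  now rewrite !oppvK.
Qed.

Lemma addvACA x y z w : x ⊕ y ⊕ (z ⊕ w) = x ⊕ z ⊕ (y ⊕ w).
Proof. rewrite <- !addvA; f_equal; rewrite !addvA; f_equal; apply addvC. Qed.

Lemma subv_eq0 x y : x ⊕ ⊖ y = V0 V -> x = y.
Proof. intro E; rewrite <- (oppvK y), (oppv_unique E); symmetry; apply oppvK. Qed.

Definition additive (f : V -> V) : Prop := forall x y, f (x ⊕ y) = f x ⊕ f y.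

Definition F_linear (f : V -> V) : Prop := forall a x, f (a · x) = a · f x.

Definition Q_diagonal (f : V -> V) : Prop :=
  forall u, in_Q V u -> exists c, f u = c · u.

Definition trivial_Q_kernel (f : V -> V) : Prop :=
  forall u, in_Q V u -> u <> V0 V -> f u <> V0 V.

Definition vsum (L : list V) : V := fold_right (Vadd V) (V0 V) L.

Lemma additive0 f : additive f -> f (V0 V) = V0 V.
Proof.
  intro Hf; apply (addvI (x := f (V0 V))).
  now rewrite <- Hf, !addv0.
Qed.

Lemma actv0 a : a · V0 V = V0 V.
Proof. apply additive0; intros ??; apply actD. Qed.

Lemma additiveN f : additive f -> forall x, f (⊖ x) = ⊖ f x.
Proof. intros Hf x; apply oppv_unique; now rewrite <- Hf, addvN, additive0. Qed.

Lemma additive_vsum f L : additive f -> vsum (map f L) = f (vsum L).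
Proof.
  intro Hf; induction L as [|x L IH]; simpl.
  - symmetry; now apply additive0.
  - now rewrite Hf, <- IH.
Qed.

Lemma vsum_app L1 L2 : vsum (L1 ++ L2) = vsum L1 ⊕ vsum L2.
Proof.
  induction L1 as [|x L IH]; simpl.
  - now rewrite add0v.
  - now rewrite <- addvA, <- IH.
Qed.

Lemma in_Q0 : in_Q V (V0 V).
Proof. intros a b; exists a; now rewrite !actv0, addv0. Qed.

Lemma in_Q_act d u : in_Q V u -> in_Q V (d · u).
Proof.
  intro Hu.
  destruct (classic (d = F0 F)) as [->|Hd]; [rewrite act0; apply in_Q0|].
  destruct (F_invertible Hd) as [d' Hd'].
  intros a b; destruct (Hu (Fmul F a d) (Fmul F b d)) as [e He].
  exists (Fmul F e d').
  now rewrite <- !actM, He, !actM, <- (actM d'), Hd', act1.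
Qed.

Lemma Q_diagonal_in_Q f u : Q_diagonal f -> in_Q V u -> in_Q V (f u).
Proof. intros Hf Hu; destruct (Hf u Hu) as [c ->]; now apply in_Q_act. Qed.

Lemma gen_in_Q_vsum v :
  gen V (in_Q V) v -> exists L, Forall (in_Q V) L /\ v = vsum L.
Proof.
  induction 1 as [u Hu| |x _ [L [HL ->]]|x y _ [L1 [HL1 ->]] _ [L2 [HL2 ->]]].
  - exists (u :: nil); split; [now constructor|]; simpl; now rewrite addv0.
  - now exists nil.
  - exists (map (Vopp V) L); split.
    + apply Forall_map; eapply Forall_impl; [|exact HL].
      intros q Hq; rewrite <- actN1; now apply in_Q_act.
    + symmetry; apply additive_vsum; intros ??; apply oppvD.
  - exists (L1 ++ L2); split; [now apply Forall_app|]; now rewrite vsum_app.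
Qed.

Definition scal_minus (c : F) (f : V -> V) (z : V) : V := c · z ⊕ ⊖ f z.

Lemma scal_minus_additive c f : additive f -> additive (scal_minus c f).
Proof.
  intros Hf x y; unfold scal_minus.
  now rewrite actD, Hf, oppvD, addvACA.
Qed.

Lemma scal_minus_Q_diagonal c f : Q_diagonal f -> Q_diagonal (scal_minus c f).
Proof.
  intros Hf u Hu; destruct (Hf u Hu) as [c' Hc'].
  destruct (Hu c (Fmul F (Fm1 F) c')) as [e He].
  exists e; unfold scal_minus.
  now rewrite Hc', <- actN1, <- actM.
Qed.

Section DiagonalMap.

Variable f : V -> V.
Hypotheses (f_additive : additive f) (f_linear : F_linear f)
  (f_diagonal : Q_diagonal f) (f_kernel : trivial_Q_kernel f).

Lemma trivial_Q_kernel_vsum L :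
  Forall (in_Q V) L -> f (vsum L) = V0 V -> vsum L = V0 V.
Proof.
  (* Induction on the length: the hypothesis is reapplied to [map h L], not [L]. *)
  remember (length L) as n eqn:Hn; revert L Hn.
  induction n as [|n IH]; intros [|q L] Hn HL Hf; try reflexivity; try discriminate.
  injection Hn as Hn; apply Forall_cons_iff in HL as [Hq HL]; simpl in Hf |- *.
  destruct (f_diagonal Hq) as [c Hc].
  set (h := scal_minus c f).
  assert (h_additive : additive h) by now apply scal_minus_additive.
  assert (hq : h q = V0 V) by (unfold h, scal_minus; now rewrite Hc, addvN).
  assert (hL : h (vsum L) = c · (q ⊕ vsum L)).
  { rewrite <- (add0v (h (vsum L))), <- hq, <- h_additive.
    unfold h, scal_minus; now rewrite Hf, oppv0, addv0. }
  assert (hL0 : vsum (map h L) = V0 V).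
  { apply IH; [now rewrite length_map| |].
    - apply Forall_map; eapply Forall_impl; [|exact HL].
      intros q' Hq'; apply Q_diagonal_in_Q; [now apply scal_minus_Q_diagonal|exact Hq'].
    - now rewrite (additive_vsum _ h_additive), hL, f_linear, Hf, actv0. }
  rewrite (additive_vsum _ h_additive), hL, <- (act0 (q ⊕ vsum L)) in hL0.
  destruct (act_eq_scalar_or_zero hL0) as [->|]; [|assumption].
  rewrite act0 in Hc.
  destruct (classic (q = V0 V)) as [->|Hq0]; [|now destruct (f_kernel Hq Hq0)].
  rewrite add0v in Hf |- *; now apply (IH L).
Qed.

Lemma trivial_Q_kernel_injective x y :
  (forall v, gen V (in_Q V) v) -> f x = f y -> x = y.
Proof.
  intros Hgen E; apply subv_eq0.
  destruct (gen_in_Q_vsum (Hgen (x ⊕ ⊖ y))) as [L [HL EL]].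
  rewrite EL; apply trivial_Q_kernel_vsum; [exact HL|].
  now rewrite <- EL, f_additive, (additiveN f_additive), E, addvN.
Qed.

Lemma trivial_Q_kernel_surjective_on_gen v :
  gen V (in_Q V) v -> exists x, f x = v.
Proof.
  induction 1 as [u Hu| |v _ [x Hx]|v w _ [x Hx] _ [y Hy]].
  - destruct (classic (u = V0 V)) as [->|Hu0].
    { exists (V0 V); now apply additive0. }
    destruct (f_diagonal Hu) as [c Hc].
    assert (Hc0 : c <> F0 F) by (intros ->; apply (f_kernel Hu Hu0); now rewrite Hc, act0).
    destruct (F_invertible Hc0) as [c' Hc'].
    exists (c' · u); now rewrite f_linear, Hc, <- actM, Hc', act1.
  - exists (V0 V); now apply additive0.
  - exists (⊖ x); now rewrite (additiveN f_additive), Hx.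
  - exists (x ⊕ y); now rewrite f_additive, Hx, Hy.
Qed.

End DiagonalMap.

Lemma is_aut_iff_trivial_Q_kernel f :
  (forall v, gen V (in_Q V) v) -> additive f -> F_linear f -> Q_diagonal f ->
  is_aut V f <-> trivial_Q_kernel f.
Proof.
  intros Hgen Hadd Hlin Hdiag; split.
  - intros (_ & Hinj & _) u _ Hu0 Hu; apply Hu0, Hinj.
    now rewrite Hu, additive0.
  - intro Hker; split; [exact Hadd|split].
    + intros x y; now apply trivial_Q_kernel_injective.
    + intro v; now apply trivial_Q_kernel_surjective_on_gen.
Qed.

Lemma fsum_act_additive s : additive (fsum_act V s).
Proof.
  induction s as [|a s IH]; intros x y; simpl.
  - now rewrite addv0.
  - now rewrite IH, actD, addvACA.
Qed.

Lemma fsum_act_F_linear s : commutative_over V -> F_linear (fsum_act V s).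
Proof.
  intros C d x; induction s as [|a s IH]; simpl.
  - now rewrite actv0.
  - now rewrite IH, actD, C.
Qed.

Lemma fsum_act_plus_u s u op :
  is_plus_u V u op -> fsum_act V s u = fold_right op (F0 F) s · u.
Proof.
  intro Hop; induction s as [|a s IH]; simpl.
  - now rewrite act0.
  - now rewrite Hop, IH.
Qed.

Lemma in_Q_plus_u u : in_Q V u -> exists op, is_plus_u V u op.
Proof.
  intro Hu.
  exists (fun a b => proj1_sig (constructive_indefinite_description _ (Hu a b))).
  intros a b; now destruct (constructive_indefinite_description _ (Hu a b)).
Qed.

Lemma fsum_act_Q_diagonal s : Q_diagonal (fsum_act V s).
Proof.
  intros u Hu; destruct (in_Q_plus_u Hu) as [op Hop].
  exists (fold_right op (F0 F) s); now apply fsum_act_plus_u.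
Qed.

Lemma fsum_act_eq0_iff s u op : u <> V0 V -> is_plus_u V u op ->
  fsum_act V s u = V0 V <-> fold_right op (F0 F) s = F0 F.
Proof.
  intros Hu0 Hop; rewrite (fsum_act_plus_u s Hop), <- (act0 u); split.
  - intro E; now destruct (act_eq_scalar_or_zero E).
  - now intros ->.
Qed.

Lemma trivial_Q_kernel_fsum_act_iff s :
  trivial_Q_kernel (fsum_act V s) <->
  forall op, block_type V op -> fold_right op (F0 F) s <> F0 F.
Proof.
  split.
  - intros Hker op (u & Hu & Hu0 & Hop).
    rewrite <- (fsum_act_eq0_iff s Hu0 Hop); now apply Hker.
  - intros Hs u Hu Hu0; destruct (in_Q_plus_u Hu) as [op Hop].
    rewrite (fsum_act_eq0_iff s Hu0 Hop); apply Hs; now exists u.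
Qed.

End FGroup.

Lemma fsum_act_is_aut_iff (F : FData) (V : VData F) s :
  near_vector_space V -> commutative_over V ->
  is_aut V (fsum_act V s) <->
  forall op, block_type V op -> fold_right op (F0 F) s <> F0 F.
Proof.
  intros [HV Hgen] C.
  rewrite (is_aut_iff_trivial_Q_kernel HV Hgen (fsum_act_additive HV s)
             (fsum_act_F_linear HV s C) (fsum_act_Q_diagonal HV s)).
  now apply trivial_Q_kernel_fsum_act_iff.
Qed.

Theorem mainTheorem8 (F : FData) (V1 V2 : VData F)
  (H1 : near_vector_space V1) (H2 : near_vector_space V2)
  (C1 : commutative_over V1) (C2 : commutative_over V2)
  (HBT : forall op : F -> F -> F, block_type V1 op <-> block_type V2 op)
  (s : list F) (hs : s <> nil) :
  is_aut V1 (fsum_act V1 s) <-> is_aut V2 (fsum_act V2 s).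
Proof.
  rewrite (fsum_act_is_aut_iff s H1 C1), (fsum_act_is_aut_iff s H2 C2).
  split; intros Hs op Hop; apply Hs, HBT, Hop.
Qed.
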